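(* Let $E\in M_n(\mathbb{FT})$ be an idempotent all of whose diagonal entries equal $0$. Choose a set $\{c_1,\dots,c_k\}$ of representatives of the critical classes of $E$, and let $M$ be the $k\times n$ matrix over $\mathbb{T}$, with rows indexed by $c_1,\dots,c_k$, defined by $M_{c_i,j}=0$ if $j=c_i$ and $M_{c_i,j}=-\infty$ otherwise. Then (i) $F=M\otimes E\otimes M^T$ (which is the $k\times k$ submatrix of $E$ with rows and columns indexed by $c_1,\dots,c_k$) is an idempotent of rank $k$ in $M_k(\mathbb{FT})$; (ii) the map $\phi:A\mapsto M\otimes A\otimes M^T$ restricts to an isomorphism of groups from the $\mathcal H$-class of $E$ in $M_n(\mathbb{FT})$ onto the $\mathcal H$-class of $F$ in $M_k(\mathbb{FT})$.
   Context: $\mathbb{FT}$ is $\mathbb{R}$ with $a\oplus b=\max(a,b)$, $a\otimes b=a+b$; $\mathbb{T}=\mathbb{R}\cup\{-\infty\}$ with the obvious extensions. Matrices are multiplied by $(A\otimes B)_{i,j}=\bigoplus_k A_{i,k}\otimes B_{k,j}$; $M_n(\mathbb{FT})$ is the semigroup of real $n\times n$ matrices. For $A\in M_n(\mathbb{FT})$, $\Gamma_A$ is the complete weighted digraph on $\{1,\dots,n\}$ with an edge $j\to i$ of weight $A_{i,j}$; the maximum cycle mean of $A$ is the maximum of the (arithmetic) average edge weights over all closed paths; the critical graph consists of all nodes and edges lying on a closed path whose average weight equals the maximum cycle mean; its nodes are critical nodes, and the critical classes are the strongly connected components of the critical graph (equivalence classes of critical nodes). $C(A)$ is the set of finite componentwise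 maxima of columns of $A$ shifted by real constants; the rank of an idempotent $E$ is the minimal cardinality of a generating set of $C(E)$ under componentwise max and adding real constants. Green's relations on a semigroup $S$: $a\,\mathcal{R}\,b$ iff $aS^1=bS^1$, $a\,\mathcal{L}\,b$ iff $S^1a=S^1b$, $\mathcal{H}=\mathcal{L}\cap\mathcal{R}$. *)

(* The real line is an arbitrary [R : realType]
   (complete archimedean ordered field, i.e. a model of the reals);
   T = R u {-oo} is MathComp's extended reals [\bar R] (we never use +oo). *)
From HB Require Import structures.
From mathcomp Require Import all_boot all_order all_algebra.
From mathcomp Require Import reals constructive_ereal.
Set Implicit Arguments. Unset Strict Implicit. Unset Printing Implicit Defensive.
Import Order.TTheory GRing.Theory Num.Theory.
Local Open Scope ring_scope.

Section Tropical.
Variable R : realType.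

Definition tmul m p q (A : 'M[\bar R]_(m, p)) (B : 'M[\bar R]_(p, q))
  : 'M[\bar R]_(m, q) :=
  \matrix_(i, j) \big[Order.max / -oo%E]_(l < p) (A i l + B l j)%E.

Definition tembed m p (A : 'M[R]_(m, p)) : 'M[\bar R]_(m, p) := map_mx (@EFin R) A.

Definition fmul n (A B : 'M[R]_n) : 'M[R]_n :=
  map_mx (@fine R) (tmul (tembed A) (tembed B)).

Definition tidempotent n (E : 'M[R]_n) : Prop := fmul E E = E.

Definition in_right_ideal n (A X : 'M[R]_n) : Prop :=
  X = A \/ exists Y, X = fmul A Y.
Definition in_left_ideal n (A X : 'M[R]_n) : Prop :=
  X = A \/ exists Y, X = fmul Y A.
Definition greenR n (A B : 'M[R]_n) : Prop :=
  forall X, in_right_ideal A X <-> in_right_ideal B X.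
Definition greenL n (A B : 'M[R]_n) : Prop :=
  forall X, in_left_ideal A X <-> in_left_ideal B X.
Definition greenH n (A B : 'M[R]_n) : Prop := greenR A B /\ greenL A B.

Definition vshift n (c : R) (v : 'cV[R]_n) : 'cV[R]_n := \col_i (c + v i 0).
Definition vmax n (v w : 'cV[R]_n) : 'cV[R]_n := \col_i Num.max (v i 0) (w i 0).
Definition vmax_seq n (v0 : 'cV[R]_n) (s : seq 'cV[R]_n) : 'cV[R]_n :=
  foldr (@vmax n) v0 s.

Definition in_tspan n (G : 'cV[R]_n -> Prop) (v : 'cV[R]_n) : Prop :=
  exists (p0 : R * 'cV[R]_n) (s : seq (R * 'cV[R]_n)),
    G p0.2 /\ (forall p, p \in s -> G p.2) /\
    v = vmax_seq (vshift p0.1 p0.2) [seq vshift p.1 p.2 | p <- s].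

Definition colspace n (E : 'M[R]_n) : 'cV[R]_n -> Prop :=
  in_tspan (fun w => exists j, w = col j E).

Definition generates n (G C : 'cV[R]_n -> Prop) : Prop :=
  (forall g, G g -> C g) /\ (forall v, C v <-> in_tspan G v).

(* minimal cardinality of a generating set of C(E); only finite generating
   sets can be minimal, so finite ones (duplicate-free sequences) suffice *)
Definition trank n (E : 'M[R]_n) (r : nat) : Prop :=
  (exists s : seq 'cV[R]_n,
      uniq s /\ size s = r /\ generates (fun v => v \in s) (colspace E)) /\
  (forall s : seq 'cV[R]_n,
      uniq s -> generates (fun v => v \in s) (colspace E) -> (r <= size s)%N).

(* closed path x :: s = [i_0; ...; i_{l-1}] with edges i_t -> i_{t+1 mod l};
   the edge j -> i has weight A i j *)
Definition cyc_weight n (A : 'M[R]_n) (x : 'I_n) (s : seq 'I_n) : R :=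
  let p := x :: s in let l := size p in
  \sum_(t < l) A (nth x p (t.+1 %% l)) (nth x p t).
Definition cyc_mean n (A : 'M[R]_n) (x : 'I_n) (s : seq 'I_n) : R :=
  cyc_weight A x s / (size (x :: s))%:R.

Definition is_max_cycle_mean n (A : 'M[R]_n) (m : R) : Prop :=
  (exists x s, cyc_mean A x s = m) /\ (forall x s, cyc_mean A x s <= m).

Definition crit_cycle n (A : 'M[R]_n) (x : 'I_n) (s : seq 'I_n) : Prop :=
  exists m, is_max_cycle_mean A m /\ cyc_mean A x s = m.

Definition crit_node n (A : 'M[R]_n) (i : 'I_n) : Prop :=
  exists x s, crit_cycle A x s /\ i \in x :: s.

Definition crit_edge n (A : 'M[R]_n) (j i : 'I_n) : Prop :=
  exists x s, crit_cycle A x s /\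
    exists t, (t < size (x :: s))%N /\ nth x (x :: s) t = j /\
              nth x (x :: s) (t.+1 %% size (x :: s)) = i.

Definition crit_walk n (A : 'M[R]_n) (x : 'I_n) (s : seq 'I_n) : Prop :=
  forall t, (t < size s)%N -> crit_edge A (nth x (x :: s) t) (nth x s t).

Definition same_crit_class n (A : 'M[R]_n) (i j : 'I_n) : Prop :=
  crit_node A i /\ crit_node A j /\
  (exists s, crit_walk A i s /\ last i s = j) /\
  (exists s, crit_walk A j s /\ last j s = i).

Definition crit_class_reps n k (A : 'M[R]_n) (c : 'I_k -> 'I_n) : Prop :=
  (forall a, crit_node A (c a)) /\
  (forall a b, same_crit_class A (c a) (c b) -> a = b) /\
  (forall i, crit_node A i -> exists a, same_crit_class A i (c a)).

Definition selmx n k (c : 'I_k -> 'I_n) : 'M[\bar R]_(k, n) :=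
  \matrix_(a, j) (if j == c a then 0%E else -oo%E).

Definition submx_c n k (c : 'I_k -> 'I_n) (A : 'M[R]_n) : 'M[R]_k :=
  \matrix_(a, b) A (c a) (c b).

End Tropical.

From HB Require Import structures.
From mathcomp Require Import all_boot all_order all_algebra.
From mathcomp Require Import reals constructive_ereal.
From mathcomp Require Import lra.
Import Order.TTheory GRing.Theory Num.Theory.
Local Open Scope ring_scope.
Set Implicit Arguments. Unset Strict Implicit. Unset Printing Implicit Defensive.

(* Idempotency gives E_il + E_lj <= E_ij, and with the zero diagonal every
   closed path has weight <= 0.  So the maximum cycle mean is 0, every node is
   critical, and i, j lie in the same critical class iff E_ij + E_ji = 0.
   Consequently a max-plus product A (x) B with A (x) E = A and E (x) B = B
   may be computed through the representatives only:
   (A (x) B)_xy = max_a A_{x c_a} + B_{c_a y}.  This makes phi multiplicative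
   and injective on the H-class of E, and G |-> E[.,c] (x) G (x) E[c,.] is an
   inverse on the H-class of F.  The columns of F are pairwise
   non-proportional and each is an extremal of C(F) (it is the least element
   of C(F) that is 0 at its index), so every generating set of C(F) contains
   a shift of each of them: rank F = k. *)

Section MaxPlus.
Variable R : realType.

Lemma bigmaxe_seqP (I : eqType) (s : seq I) (f : I -> R) :
  (forall i, i \in s -> ((f i)%:E <= \big[Order.max/-oo%E]_(j <- s) (f j)%:E)%E) /\
  (s = [::] \/
   exists2 i, i \in s & \big[Order.max/-oo%E]_(j <- s) (f j)%:E = (f i)%:E).
Proof.
elim: s => [|a s [IH1 IH2]]; first by split=> //; left.
rewrite big_cons; split.
  move=> i; rewrite inE => /predU1P[->|/IH1 H]; first by rewrite le_max lexx.
  by rewrite le_max H orbT.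
right; case: IH2 => [->|[j js ->]].
  by exists a; rewrite ?inE ?eqxx // big_nil maxeNy.
have [H|H] := leP (f a)%:E (f j)%:E.
  by exists j; rewrite // inE js orbT.
by exists a; rewrite // inE eqxx.
Qed.

(* [rmax] over an empty type is the junk value 0. *)
Definition rmax (I : finType) (f : I -> R) : R :=
  fine (\big[Order.max/-oo%E]_(i : I) (f i)%:E).

Lemma rmaxP (I : finType) (i0 : I) (f : I -> R) :
  (forall i, f i <= rmax f) /\ exists i, rmax f = f i.
Proof.
have [H1 [Hs|[j _ Hj]]] := bigmaxe_seqP (index_enum I) f.
  by have := mem_index_enum i0; rewrite Hs.
rewrite /rmax Hj /=; split; last by exists j.
by move=> i; have := H1 i (mem_index_enum i); rewrite Hj lee_fin.
Qed.

Lemma rmax_eq (I : finType) (f : I -> R) m :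
  (forall i, f i <= m) -> (exists i, m = f i) -> rmax f = m.
Proof.
move=> H1 [i Hi]; have [H2 [j Hj]] := rmaxP i f.
by rewrite Hj; apply/le_anti; rewrite H1 /= Hi -Hj H2.
Qed.

Lemma fmulE n (A B : 'M[R]_n) i j :
  fmul A B i j = rmax (fun l => A i l + B l j).
Proof.
by rewrite /fmul /rmax !mxE; congr fine; apply: eq_bigr => l _; rewrite !mxE.
Qed.

Lemma fmulP n (A B : 'M[R]_n) i j :
  (forall l, A i l + B l j <= fmul A B i j) /\
  exists l, fmul A B i j = A i l + B l j.
Proof. by rewrite fmulE; apply: rmaxP. Qed.

Lemma fmul_eq n (A B : 'M[R]_n) i j m :
  (forall l, A i l + B l j <= m) -> (exists l, m = A i l + B l j) ->
  fmul A B i j = m.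
Proof. by rewrite fmulE; apply: rmax_eq. Qed.

Lemma fmulA n (A B C : 'M[R]_n) : fmul (fmul A B) C = fmul A (fmul B C).
Proof.
apply/matrixP => i j.
have ge_ABC l : fmul A B i l + C l j <= fmul A (fmul B C) i j.
  have [_ [m ->]] := fmulP A B i l.
  apply: le_trans ((fmulP A (fmul B C) i j).1 m).
  by rewrite -addrA lerD2l (fmulP B C m j).1.
apply: fmul_eq => //.
have [_ [m Hm]] := fmulP A (fmul B C) i j.
have [_ [l Hl]] := fmulP B C m j.
exists l; apply/le_anti; rewrite ge_ABC andbT Hm Hl addrA lerD2r.
exact: (fmulP A B i l).1.
Qed.

Lemma bigmaxe_only m (f : 'I_m -> \bar R) j0 :
  (forall j, j != j0 -> f j = -oo%E) -> \big[Order.max/-oo%E]_(j < m) f j = f j0.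
Proof. by move=> H; rewrite (bigD1 j0) //= big1 ?maxeNy. Qed.

Lemma submx_cE n m (d : 'I_m -> 'I_n) (A : 'M[R]_n) a b :
  submx_c d A a b = A (d a) (d b).
Proof. by rewrite mxE. Qed.

Lemma tmul_selmx n m (d : 'I_m -> 'I_n) (A : 'M[R]_n) :
  tmul (tmul (selmx R d) (tembed A)) (selmx R d)^T = tembed (submx_c d A).
Proof.
apply/matrixP => a b; rewrite mxE (@bigmaxe_only _ _ (d b)); last first.
  by move=> l hl; rewrite !mxE (negbTE hl) addeNy.
rewrite !mxE eqxx adde0 (@bigmaxe_only _ _ (d a)); first by rewrite !mxE eqxx add0e.
by move=> j hj; rewrite !mxE (negbTE hj) addNye.
Qed.

Lemma sum_shift_periodic (f : nat -> R) l s : (forall t, f (t + l)%N = f t) ->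
  \sum_(0 <= t < l) f (s + t)%N = \sum_(0 <= t < l) f t.
Proof.
move=> Hf; elim: s => [|s IH]; first by apply: eq_bigr => t _; rewrite add0n.
rewrite -IH {IH}; case: l Hf => [|l] Hf; first by rewrite !big_geq.
rewrite big_nat_recr // big_nat_recl //= addn0 -(Hf s) [RHS]addrC.
by congr (_ + _); [apply: eq_bigr => t _|]; rewrite addSnnS.
Qed.

Lemma greenR_intro n (P Q : 'M[R]_n) :
  (exists U, P = fmul Q U) -> (exists V, Q = fmul P V) -> greenR P Q.
Proof.
move=> [U HU] [V HV] X; split.
  by case=> [->|[Y ->]]; right; [exists U | exists (fmul U Y); rewrite HU fmulA].
by case=> [->|[Y ->]]; right; [exists V | exists (fmul V Y); rewrite HV fmulA].
Qed.

Lemma greenL_intro n (P Q : 'M[R]_n) :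
  (exists U, P = fmul U Q) -> (exists V, Q = fmul V P) -> greenL P Q.
Proof.
move=> [U HU] [V HV] X; split.
  by case=> [->|[Y ->]]; right; [exists U | exists (fmul Y U); rewrite HU fmulA].
by case=> [->|[Y ->]]; right; [exists V | exists (fmul Y V); rewrite HV fmulA].
Qed.

Lemma greenR_idemP n (P Q : 'M[R]_n) : tidempotent Q -> greenR P Q ->
  fmul Q P = P /\ exists V, Q = fmul P V.
Proof.
move=> HQ H; split.
  case: ((H P).1 (or_introl erefl)) => [->|[U ->]]; first exact: HQ.
  by rewrite -fmulA HQ.
case: ((H Q).2 (or_introl erefl)) => [h|[V hV]]; last by exists V.
by exists P; rewrite -h HQ.
Qed.

Lemma greenL_idemP n (P Q : 'M[R]_n) : tidempotent Q -> greenL P Q ->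
  fmul P Q = P /\ exists V, Q = fmul V P.
Proof.
move=> HQ H; split.
  case: ((H P).1 (or_introl erefl)) => [->|[U ->]]; first exact: HQ.
  by rewrite fmulA HQ.
case: ((H Q).2 (or_introl erefl)) => [h|[V hV]]; last by exists V.
by exists P; rewrite -h HQ.
Qed.

Lemma greenH_idem_absorb n (P Q : 'M[R]_n) : tidempotent Q -> greenH P Q ->
  fmul Q P = P /\ fmul P Q = P.
Proof.
move=> HQ [HR HL].
by split; [exact: (greenR_idemP HQ HR).1 | exact: (greenL_idemP HQ HL).1].
Qed.

Lemma vshift0 m (v : 'cV[R]_m) : vshift 0 v = v.
Proof. by apply/matrixP => i j; rewrite !mxE add0r ord1. Qed.

Lemma in_tspan_ext m (G1 G2 : 'cV[R]_m -> Prop) v :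
  (forall w, G1 w <-> G2 w) -> (in_tspan G1 v <-> in_tspan G2 v).
Proof.
move=> H; split => [[p0 [s [h0 [hs e]]]]|[p0 [s [h0 [hs e]]]]]; exists p0, s;
  (split; [by apply/H | split => // p hp; apply/H; exact: hs]).
Qed.

Lemma vmax_seq_ge m (v0 : 'cV[R]_m) s i w :
  (w = v0 \/ w \in s) -> w i 0 <= vmax_seq v0 s i 0.
Proof.
elim: s => [|a s IH] H /=; first by case: H => // ->.
rewrite mxE le_max; case: H => [e|]; first by rewrite IH ?orbT //; left.
rewrite inE => /orP [/eqP ->|h]; first by rewrite lexx.
by rewrite IH ?orbT //; right.
Qed.

Lemma vmax_seq_attained m (v0 : 'cV[R]_m) s i :
  exists w, (w = v0 \/ w \in s) /\ vmax_seq v0 s i 0 = w i 0.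
Proof.
elim: s => [|a s [w [Hw e]]] /=; first by exists v0; split; [left|].
rewrite mxE; case: (leP (a i 0) (vmax_seq v0 s i 0)) => _.
  by exists w; split => //; case: Hw => [->|h]; [left | right; rewrite inE h orbT].
by exists a; split => //; right; exact: mem_head.
Qed.

Lemma in_tspan_attained m (G : 'cV[R]_m -> Prop) v i : in_tspan G v ->
  exists l g, G g /\ (forall x, l + g x 0 <= v x 0) /\ v i 0 = l + g i 0.
Proof.
move=> [[l0 g0] [s [Hg0 [Hs ->]]]] /=.
have [w [Hw ->]] := vmax_seq_attained (vshift l0 g0) [seq vshift p.1 p.2 | p <- s] i.
have ge_w x := vmax_seq_ge x Hw.
case: Hw ge_w => [->|/mapP [p hp ->]] ge_w.
  exists l0, g0; split=> //; split=> [x|]; last by rewrite mxE.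
  by have := ge_w x; rewrite mxE.
exists p.1, p.2; split; first exact: Hs.
split=> [x|]; last by rewrite mxE.
by have := ge_w x; rewrite mxE.
Qed.

End MaxPlus.

Section ZeroDiagonalIdempotent.
Variables (R : realType) (n : nat) (E : 'M[R]_n).
Hypothesis Eidem : tidempotent E.
Hypothesis Ediag : forall i, E i i = 0.

Lemma idem_triangle i l j : E i l + E l j <= E i j.
Proof. by have := (fmulP E E i j).1 l; rewrite Eidem. Qed.

Lemma path_weight_le (q : nat -> 'I_n) s m :
  \sum_(0 <= t < m) E (q (s + t)%N.+1) (q (s + t)%N) <= E (q (s + m)%N) (q s).
Proof.
elim: m => [|m IH]; first by rewrite big_geq // addn0 Ediag.
rewrite big_nat_recr //= addnS.
by apply: le_trans (idem_triangle _ (q (s + m)%N) _); rewrite addrC lerD2l.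
Qed.

Definition cyc_node (x : 'I_n) (s : seq 'I_n) (t : nat) :=
  nth x (x :: s) (t %% size (x :: s)).

Lemma cyc_node_periodic x s t : cyc_node x s (t + size (x :: s)) = cyc_node x s t.
Proof. by rewrite /cyc_node modnDr. Qed.

Lemma cyc_node_small x s t :
  (t < size (x :: s))%N -> cyc_node x s t = nth x (x :: s) t.
Proof. by move=> H; rewrite /cyc_node modn_small. Qed.

Lemma cyc_weightE x s : cyc_weight E x s =
  \sum_(0 <= t < size (x :: s)) E (cyc_node x s t.+1) (cyc_node x s t).
Proof.
rewrite /cyc_weight big_mkord; apply: eq_bigr => t _.
by rewrite [cyc_node x s t]cyc_node_small.
Qed.

Lemma cyc_weight_le0 x s : cyc_weight E x s <= 0.
Proof.
rewrite cyc_weightE /= big_nat_recr //=.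
have back : cyc_node x s (size s).+1 = cyc_node x s 0.
  by have := cyc_node_periodic x s 0; rewrite add0n.
rewrite back; set y := cyc_node x s (size s).
apply: le_trans (_ : E y (cyc_node x s 0) + E (cyc_node x s 0) y <= 0).
  by rewrite addrC [X in _ <= X]addrC lerD2l; exact: path_weight_le.
by have := idem_triangle y (cyc_node x s 0) y; rewrite Ediag.
Qed.

Lemma cyc_mean_le0 x s : cyc_mean E x s <= 0.
Proof. by rewrite /cyc_mean ler_pdivrMr ?mul0r ?cyc_weight_le0 // ltr0n. Qed.

Lemma cyc_mean_loop x : cyc_mean E x [::] = 0.
Proof. by rewrite /cyc_mean /cyc_weight big_ord1 /= Ediag mul0r. Qed.

Lemma max_cycle_mean0 (i : 'I_n) : is_max_cycle_mean E 0.
Proof. by split; [exists i, [::]; rewrite cyc_mean_loop | exact: cyc_mean_le0]. Qed.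

Lemma max_cycle_meanE m : is_max_cycle_mean E m -> m = 0.
Proof.
move=> [[x [s Hs]] H]; apply/le_anti; rewrite -Hs cyc_mean_le0 /=.
by rewrite Hs -(cyc_mean_loop x) H.
Qed.

Lemma crit_node_all i : crit_node E i.
Proof.
exists i, [::]; split; last by rewrite inE.
by exists 0; split; [exact: max_cycle_mean0 i | exact: cyc_mean_loop].
Qed.

Lemma crit_cycle_weight0 x s : crit_cycle E x s -> cyc_weight E x s = 0.
Proof.
move=> [m [/max_cycle_meanE -> /eqP]]; rewrite /cyc_mean.
by rewrite mulf_eq0 invr_eq0 pnatr_eq0 /= orbF => /eqP.
Qed.

(* Rotating the critical cycle to start just after the edge j -> i, the rest
   of the cycle is a path from i to j of weight <= E j i by [path_weight_le]. *)
Lemma crit_edge_sum_ge0 j i : crit_edge E j i -> 0 <= E i j + E j i.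
Proof.
move=> [x [s [Hc [t [Ht [Hj Hi]]]]]].
have W := crit_cycle_weight0 Hc; rewrite cyc_weightE in W.
rewrite -(@sum_shift_periodic _ _ _ t.+1) /= in W; last first.
  by move=> u; rewrite -addSn !cyc_node_periodic.
rewrite big_nat_recr //= in W.
have P := path_weight_le (cyc_node x s) t.+1 (size s).
have at_j : cyc_node x s (t.+1 + size s)%N = j.
  by rewrite addSnnS cyc_node_periodic cyc_node_small.
have at_i : cyc_node x s t.+1 = i by [].
rewrite at_j -addnS cyc_node_periodic at_i in W; rewrite at_j at_i in P.
by rewrite -W [X in _ <= X]addrC lerD2r.
Qed.

Lemma crit_walk_sum_ge0 x s :
  crit_walk E x s -> 0 <= E (last x s) x + E x (last x s).
Proof.
elim: s x => [|y s IH] x H /=; first by rewrite Ediag addr0.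
have Hxy := crit_edge_sum_ge0 (H 0%N isT).
have Hw : crit_walk E y s.
  move=> t Ht; have := H t.+1 Ht => /=.
  by rewrite (set_nth_default y x) ?(set_nth_default y x Ht) //= ltnW.
have := IH y Hw; set z := last y s => Hz.
have H1 := idem_triangle z y x; have H2 := idem_triangle x y z.
move: Hxy Hz H1 H2 => /=; lra.
Qed.

Lemma crit_edge_pair i j : E i j + E j i = 0 -> crit_edge E i j.
Proof.
move=> H; exists i, [:: j]; split; last by exists 0%N.
exists 0; split; first exact: max_cycle_mean0 i.
by rewrite /cyc_mean /cyc_weight big_ord_recr big_ord1 /= addrC H mul0r.
Qed.

Lemma same_crit_classP i j : same_crit_class E i j <-> E i j + E j i = 0.
Proof.
split=> [[_ [_ [[s [Hs Hl]] _]]]|H].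
  have := crit_walk_sum_ge0 Hs; rewrite Hl => H.
  apply/le_anti; rewrite addrC H andbT.
  by have := idem_triangle j i j; rewrite Ediag.
split; [exact: crit_node_all | split; [exact: crit_node_all | split]].
  by exists [:: j]; split => //; case => // _; exact: crit_edge_pair.
by exists [:: i]; split => //; case => // _; apply: crit_edge_pair; rewrite addrC.
Qed.

Section Representatives.
Variables (k : nat) (c : 'I_k -> 'I_n).
Hypothesis Ereps : crit_class_reps E c.

Let F := submx_c c E.

Lemma exists_rep x : exists a, E x (c a) + E (c a) x = 0.
Proof.
have [_ [_ H]] := Ereps; have [a Ha] := H x (crit_node_all x).
by exists a; apply/same_crit_classP.
Qed.

Lemma rep_inj a b : E (c a) (c b) + E (c b) (c a) = 0 -> a = b.
Proof. by move=> h; have [_ [Hu _]] := Ereps; apply/Hu/same_crit_classP. Qed.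

Lemma fmul_reps (A B : 'M[R]_n) x y : fmul A E = A -> fmul E B = B ->
  (forall a, A x (c a) + B (c a) y <= fmul A B x y) /\
  exists a, fmul A B x y = A x (c a) + B (c a) y.
Proof.
move=> HA HB; have [H1 [l Hl]] := fmulP A B x y; split => [a|]; first exact: H1.
have [a Ha] := exists_rep l; exists a; apply/le_anti; rewrite H1 andbT Hl.
have := (fmulP A E x (c a)).1 l; rewrite HA => h1.
have := (fmulP E B (c a) y).1 l; rewrite HB => h2.
move: Ha h1 h2; lra.
Qed.

Lemma submx_c_fmul A B : fmul A E = A -> fmul E B = B ->
  submx_c c (fmul A B) = fmul (submx_c c A) (submx_c c B).
Proof.
move=> HA HB; apply/matrixP => a b; rewrite submx_cE; symmetry; apply: fmul_eq.
  by move=> d; rewrite !submx_cE; exact: (fmul_reps (c a) (c b) HA HB).1.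
by have [_ [d ->]] := fmul_reps (c a) (c b) HA HB; exists d; rewrite !submx_cE.
Qed.

Lemma submx_c_idem : tidempotent F.
Proof.
apply/matrixP => a b; apply: fmul_eq.
  by move=> d; rewrite !mxE; exact: idem_triangle.
by exists a; rewrite !mxE Ediag add0r.
Qed.

Lemma greenH_submx_c A : greenH A E -> greenH (submx_c c A) F.
Proof.
move=> [HR HL]; have [hA [V hV]] := greenR_idemP Eidem HR.
have [hA' [W hW]] := greenL_idemP Eidem HL; split.
  apply: greenR_intro; first by exists (submx_c c A); rewrite -{1}hA submx_c_fmul.
  exists (submx_c c (fmul E (fmul V E))).
  have h1 : fmul A (fmul E (fmul V E)) = E by rewrite -fmulA hA' -fmulA -hV Eidem.
  by rewrite /F -{1}h1 submx_c_fmul // -fmulA Eidem.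
apply: greenL_intro; first by exists (submx_c c A); rewrite -{1}hA' submx_c_fmul.
exists (submx_c c (fmul (fmul E W) E)).
have h1 : fmul (fmul (fmul E W) E) A = E by rewrite fmulA hA fmulA -hW Eidem.
by rewrite /F -{1}h1 submx_c_fmul // fmulA Eidem.
Qed.

Lemma submx_c_fmul_greenH A B : greenH A E -> greenH B E ->
  submx_c c (fmul A B) = fmul (submx_c c A) (submx_c c B).
Proof.
move=> /(greenH_idem_absorb Eidem) [_ hA] /(greenH_idem_absorb Eidem) [hB _].
exact: submx_c_fmul.
Qed.

(* Writing A = E A E, each entry A_xy equals E_{x c_a} + A_{c_a c_b} + E_{c_b y}
   for suitable a, b, while B_xy is at least this expression. *)
Lemma submx_c_le A B x y :
  fmul E A = A -> fmul A E = A -> fmul E B = B -> fmul B E = B ->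
  submx_c c A = submx_c c B -> A x y <= B x y.
Proof.
move=> hEA hAE hEB hBE hAB.
have [_ [a Ha]] := fmul_reps x y Eidem hEA.
have [_ [b Hb]] := fmul_reps (c a) y hAE Eidem.
have B1 := (fmul_reps x y Eidem hEB).1 a.
have B2 := (fmul_reps (c a) y hBE Eidem).1 b.
rewrite hEA in Ha; rewrite hAE in Hb; rewrite hEB in B1; rewrite hBE in B2.
have e : A (c a) (c b) = B (c a) (c b).
  by have := congr1 (fun M : 'M[R]_k => M a b) hAB; rewrite !mxE.
rewrite Ha Hb e; move: B1 B2; lra.
Qed.

Lemma submx_c_inj_greenH A B : greenH A E -> greenH B E ->
  submx_c c A = submx_c c B -> A = B.
Proof.
move=> /(greenH_idem_absorb Eidem) [h1 h2] /(greenH_idem_absorb Eidem) [h3 h4] e.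
by apply/matrixP => x y; apply/le_anti; rewrite !submx_c_le.
Qed.

Definition lift_c (G : 'M[R]_k) : 'M[R]_n :=
  \matrix_(x, y) rmax (fun p : 'I_k * 'I_k => E x (c p.1) + G p.1 p.2 + E (c p.2) y).

Lemma lift_cP (G : 'M[R]_k) x y :
  (forall a b, E x (c a) + G a b + E (c b) y <= lift_c G x y) /\
  exists a b, lift_c G x y = E x (c a) + G a b + E (c b) y.
Proof.
have [a _] := exists_rep x; rewrite mxE.
have [H1 [[a' b'] H2]] := rmaxP (a, a)
  (fun p : 'I_k * 'I_k => E x (c p.1) + G p.1 p.2 + E (c p.2) y).
by split; [move=> a0 b0; exact: H1 (a0, b0) | exists a', b'].
Qed.

Lemma lift_c_submx : lift_c F = E.
Proof.
apply/matrixP => x y; have [H1 [a [b Hab]]] := lift_cP F x y.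
have [a0 Ha0] := exists_rep x; have := H1 a0 a0; rewrite Hab !submx_cE Ediag addr0 => h.
have t1 := idem_triangle x (c a) (c b); have t2 := idem_triangle x (c b) y.
have t3 := idem_triangle (c a0) x y.
by apply/le_anti/andP; split; move: h t1 t2 t3 Ha0; lra.
Qed.

Lemma lift_c_fmul G H : fmul (lift_c G) (lift_c H) = lift_c (fmul (fmul G F) H).
Proof.
apply/matrixP => x y.
have ge_lift l : lift_c G x l + lift_c H l y <= lift_c (fmul (fmul G F) H) x y.
  have [_ [a [b ->]]] := lift_cP G x l; have [_ [a' [b' ->]]] := lift_cP H l y.
  have h1 := (lift_cP (fmul (fmul G F) H) x y).1 a b'.
  have h2 := (fmulP (fmul G F) H a b').1 a'.
  have h3 := (fmulP G F a a').1 b; rewrite /F submx_cE in h3.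
  have h4 := idem_triangle (c b) l (c a').
  move: h1 h2 h3 h4; lra.
apply: fmul_eq => //.
have [_ [a [b' h]]] := lift_cP (fmul (fmul G F) H) x y.
have [_ [a' h1]] := fmulP (fmul G F) H a b'.
have [_ [b h2]] := fmulP G F a a'; rewrite /F submx_cE in h2.
exists (c b); apply/le_anti; rewrite ge_lift andbT.
have g1 := (lift_cP G x (c b)).1 a b; rewrite Ediag in g1.
have g2 := (lift_cP H (c b) y).1 a' b'.
rewrite h h1 h2; move: g1 g2; lra.
Qed.

Lemma submx_c_lift_c G : fmul F G = G -> fmul G F = G -> submx_c c (lift_c G) = G.
Proof.
move=> hFG hGF; apply/matrixP => a b; rewrite submx_cE.
have [H1 [a' [b' Hp]]] := lift_cP G (c a) (c b).
have g := H1 a b; rewrite !Ediag add0r addr0 Hp in g; rewrite Hp.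
have h1 := (fmulP F G a b').1 a'; rewrite hFG /F mxE in h1.
have h2 := (fmulP G F a b).1 b'; rewrite hGF /F mxE in h2.
by apply/le_anti/andP; split; move: g h1 h2; lra.
Qed.

Lemma submx_c_surj_greenH G : greenH G F -> exists A, greenH A E /\ submx_c c A = G.
Proof.
move=> [HR HL]; have [hFG [U hU]] := greenR_idemP submx_c_idem HR.
have [hGF [V hV]] := greenL_idemP submx_c_idem HL.
exists (lift_c G); split; last exact: submx_c_lift_c.
split; [apply: greenR_intro | apply: greenL_intro].
- by exists (lift_c G); rewrite -lift_c_submx lift_c_fmul submx_c_idem hFG.
- by exists (lift_c U); rewrite lift_c_fmul hGF -hU lift_c_submx.
- by exists (lift_c G); rewrite -lift_c_submx lift_c_fmul !hGF.
- by exists (lift_c V); rewrite lift_c_fmul fmulA hFG -hV lift_c_submx.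
Qed.

Definition subeigen (v : 'cV[R]_k) := forall a b, F a b + v b 0 <= v a 0.

Lemma subeigen_col j : subeigen (col j F).
Proof. by move=> x b; rewrite !mxE; apply: idem_triangle. Qed.

Lemma subeigen_shift l v : subeigen v -> subeigen (vshift l v).
Proof. by move=> H x b; have := H x b; rewrite !mxE; lra. Qed.

Lemma subeigen_max v w : subeigen v -> subeigen w -> subeigen (vmax v w).
Proof.
move=> Hv Hw x b; have hv := Hv x b; have hw := Hw x b; rewrite !mxE in hv hw *.
by case: (leP (v b 0) (w b 0)) => _; rewrite le_max ?hv ?hw ?orbT.
Qed.

Lemma subeigen_span G v : (forall g, G g -> subeigen g) -> in_tspan G v -> subeigen v.
Proof.
move=> HG [p0 [s [Hp0 [Hs ->]]]].
elim: s Hs => [|q s IH] Hs /=; first exact/subeigen_shift/HG.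
apply: subeigen_max; first exact/subeigen_shift/HG/Hs/mem_head.
by apply: IH => p hp; apply: Hs; rewrite inE hp orbT.
Qed.

Lemma col_extremal b l g : subeigen g ->
  (forall x, l + g x 0 <= col b F x 0) -> col b F b 0 = l + g b 0 ->
  col b F = vshift l g.
Proof.
move=> Hg ge eqb; apply/matrixP => x y; rewrite ord1.
have := Hg x b; have := ge x; move: eqb; rewrite !mxE Ediag; lra.
Qed.

Lemma col_shift_inj a b l l' g :
  col a F = vshift l g -> col b F = vshift l' g -> a = b.
Proof.
move=> ha hb; apply: rep_inj.
have h1 := congr1 (fun v : 'cV[R]_k => v a 0) ha.
have h2 := congr1 (fun v : 'cV[R]_k => v b 0) ha.
have h3 := congr1 (fun v : 'cV[R]_k => v a 0) hb.
have h4 := congr1 (fun v : 'cV[R]_k => v b 0) hb.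
move: h1 h2 h3 h4 => /=; rewrite !mxE !Ediag; lra.
Qed.

Lemma col_inj : injective (fun b => col b F).
Proof. by move=> a b e; apply: (@col_shift_inj a b 0 0 (col b F)); rewrite vshift0. Qed.

Lemma col_in_generators s : generates (fun v => v \in s) (colspace F) ->
  forall b, exists (i : 'I_(size s)) l, col b F = vshift l s`_i.
Proof.
move=> [Hg Hc] b.
have sub_s g : g \in s -> subeigen g.
  by move/Hg; apply: subeigen_span => g' [j ->]; exact: subeigen_col.
have /Hc/(in_tspan_attained b) [l [g [gs [ge eqb]]]] : colspace F (col b F).
  by exists (0, col b F), [::]; split; [exists b | split => //=; rewrite vshift0].
have hi : (index g s < size s)%N by rewrite index_mem.
exists (Ordinal hi), l; rewrite /= nth_index //.
exact: col_extremal (sub_s _ gs) ge eqb.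
Qed.

Lemma trank_submx_c : trank F k.
Proof.
split.
  exists [seq col b F | b <- enum 'I_k].
  split; first by rewrite map_inj_uniq ?enum_uniq //; exact: col_inj.
  split; first by rewrite size_map size_enum_ord.
  split.
    move=> g /mapP [b _ ->]; exists (0, col b F), [::].
    by split; [exists b | split => //=; rewrite vshift0].
  move=> v; apply: in_tspan_ext => w; split.
    by move=> [j ->]; apply: map_f; rewrite mem_enum.
  by move=> /mapP [j _ ->]; exists j.
move=> s _ /col_in_generators /fin_all_exists [f Hf].
have f_inj : injective f.
  move=> a b e; have [la ha] := Hf a; have [lb hb] := Hf b.
  by rewrite e in ha; exact: col_shift_inj ha hb.
by have := leq_card f f_inj; rewrite !card_ord.
Qed.

End Representatives.
End ZeroDiagonalIdempotent.

Theorem theorem6p3 (R : realType) (n k : nat) (E : 'M[R]_n)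
    (c : 'I_k -> 'I_n) :
  tidempotent E ->
  (forall i, E i i = 0) ->
  crit_class_reps E c ->
  let M := selmx R c in
  let F := submx_c c E in
  let phi := fun A : 'M[R]_n => submx_c c A in
  (forall A : 'M[R]_n, tmul (tmul M (tembed A)) M^T = tembed (phi A)) /\
  tidempotent F /\ trank F k /\
  (forall A, greenH A E -> greenH (phi A) F) /\
  (forall A B, greenH A E -> greenH B E -> phi (fmul A B) = fmul (phi A) (phi B)) /\
  (forall A B, greenH A E -> greenH B E -> phi A = phi B -> A = B) /\
  (forall G, greenH G F -> exists A, greenH A E /\ phi A = G).
Proof.
move=> Eidem Ediag Ereps M F phi.
split; first exact: tmul_selmx.
split; first exact: submx_c_idem.
split; first exact: trank_submx_c.
split; first exact: greenH_submx_c.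
split; first exact: submx_c_fmul_greenH.
split; first exact: submx_c_inj_greenH.
exact: submx_c_surj_greenH.
Qed.
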